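(* There is an absolute constant $K>0$ such that the following holds. Let $n\ge 1$, $k=\lfloor\sqrt n\rfloor$, and let $M_n$ be the $\binom{n}{k}\times n$ matrix whose rows are all the distinct $0/1$ vectors of length $n$ with exactly $k$ ones. Consider a bimatrix game in which the row player's payoff matrix is $M_n$ (the column player's payoff matrix is arbitrary). Then for every mixed strategy $\mathbf{x}$ of the row player there exists a column $m$ of $M_n$ such that, for every $p\in[0,1]$ and every mixed strategy $\mathbf{y}$ of the column player that assigns probability $p$ to column $m$, the row player's regret against $\mathbf{y}$ is at least $p-K/\sqrt n$, i.e. $\max_i \mathbf{e}_i^T M_n\mathbf{y}-\mathbf{x}^T M_n\mathbf{y}\ge p-K/\sqrt{n}$.
   Context: Mixed strategies are probability vectors over rows (for the row player) and columns (for the column player); the row player's payoff under $(\mathbf{x},\mathbf{y})$ is $\mathbf{x}^T M\mathbf{y}$ for his payoff matrix $M$. The regret of the row player is the difference between the payoff of his best response to $\mathbf{y}$ and his actual payoff $\mathbf{x}^TM\mathbf{y}$. *)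

From HB Require Import structures.
From mathcomp Require Import all_boot all_order all_algebra.
From Stdlib Require Import Rdefinitions.
From mathcomp Require Import Rstruct.
Set Implicit Arguments. Unset Strict Implicit. Unset Printing Implicit Defensive.
Import Order.TTheory GRing.Theory Num.Theory.
Local Open Scope ring_scope.

Definition ksqrt (n : nat) : nat := Nat.sqrt n.

(* Row index set of M_n: subsets of {0..n-1} of size k, i.e. 0/1 vectors with
   exactly k ones (each distinct vector appears exactly once). *)
Definition rowidx (n k : nat) := {S : {set 'I_n} | #|S| == k}.

Definition Mn (n : nat) (S : rowidx n (ksqrt n)) (j : 'I_n) : R :=
  if j \in val S then 1 else 0.

Definition mixed (T : finType) (x : T -> R) : Prop :=
  (forall t, 0 <= x t) /\ \sum_(t : T) x t = 1.

Definition payoff (n : nat) (x : rowidx n (ksqrt n) -> R) (y : 'I_n -> R) : R :=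
  \sum_(S : rowidx n (ksqrt n)) \sum_(j < n) x S * Mn S j * y j.

Definition rowpay (n : nat) (S : rowidx n (ksqrt n)) (y : 'I_n -> R) : R :=
  \sum_(j < n) Mn S j * y j.

(* Regret of row player: max_i e_i^T M y - x^T M y.  The row set is nonempty
   (k <= n) for n >= 1; \max over an empty set would be 0. *)
Definition regret (n : nat) (x : rowidx n (ksqrt n) -> R) (y : 'I_n -> R) : R :=
  \big[Num.max/0]_(S : rowidx n (ksqrt n)) rowpay S y - payoff x y.

From HB Require Import structures.
From mathcomp Require Import all_boot all_order all_algebra.
From Stdlib Require Import Rdefinitions.
From mathcomp Require Import Rstruct.
From mathcomp Require Import lra zify.

Set Implicit Arguments.
Unset Strict Implicit.
Unset Printing Implicit Defensive.
Import Order.TTheory GRing.Theory Num.Theory.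
Local Open Scope ring_scope.

(* Let [m] be a column whose marginal [q m = sum_S x_S [m in S]] is minimal;
   the marginals sum to [k], so [q m <= k/n <= 1/sqrt n].  Against any [y],
   every row [S] missing [m] is beaten by the row obtained by trading the
   [y]-lightest element of [S] (of weight at most [1/k]) for [m].  Hence each
   row [S] has regret at least [p - 1/k - [m in S]], and averaging over [x]
   gives regret at least [p - 1/k - q m >= p - 3/sqrt n]. *)

Section SetSwap.

Variables (T : finType) (y : T -> R).
Hypotheses (y_ge0 : forall t, 0 <= y t) (y_sum1 : \sum_t y t = 1).

Lemma exists_swap_set (U : {set T}) (m : T) :
  (0 < #|U|)%nat -> m \notin U ->
  exists2 V : {set T}, #|V| = #|U| &
    \sum_(i in U) y i + y m - #|U|%:R^-1 <= \sum_(i in V) y i.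
Proof.
move=> U_gt0 mU; have [j0 j0U] := card_gt0P U_gt0.
pose j := [arg min_(i < j0 in U) y i]%O.
have [jU j_min] : j \in U /\ forall i, i \in U -> y j <= y i.
  by rewrite /j; case: arg_minP.
exists (m |: (U :\ j)).
  by rewrite cardsU1 in_setD1 (negbTE mU) andbF (cardsD1 j U) jU.
have yj_le : y j <= #|U|%:R^-1.
  have cardU_gt0 : 0 < (#|U|%:R : R) by rewrite ltr0n.
  rewrite -(ler_pM2l cardU_gt0) mulfV ?gt_eqF // mulr_natl -sumr_const -y_sum1.
  apply: (@le_trans _ _ (\sum_(i in U) y i)).
    by apply: ler_sum => i iU; exact: j_min.
  by rewrite [leRHS](bigID (mem U)) /= lerDl sumr_ge0.
rewrite big_setU1 ?in_setD1 ?(negbTE mU) ?andbF //= (big_setD1 j jU) /=.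
lra.
Qed.

End SetSwap.

Lemma exists_le_mean (T : finType) (f : T -> R) (t0 : T) :
  exists m, #|T|%:R * f m <= \sum_t f t.
Proof.
exists [arg min_(i < t0) f i]%O; case: arg_minP => // m _ m_min.
by rewrite mulr_natl -sumr_const; apply: ler_sum => t _; exact: m_min.
Qed.

Section RegretBound.

Variable n : nat.
Local Notation k := (ksqrt n).
Local Notation row := (rowidx n k).

Lemma rowpayE (S : row) (y : 'I_n -> R) :
  rowpay S y = \sum_(i in val S) y i.
Proof.
rewrite /rowpay [RHS]big_mkcond; apply: eq_bigr => i _.
by rewrite /Mn; case: ifP; rewrite ?mul1r ?mul0r.
Qed.

Lemma sum_Mn (S : row) : \sum_j Mn S j = k%:R.
Proof. by rewrite /Mn -big_mkcond /= sumr_const (eqP (valP S)). Qed.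

Lemma sum_marginals (x : row -> R) : mixed x ->
  \sum_j \sum_S x S * Mn S j = k%:R.
Proof.
move=> [_ x_sum1]; rewrite exchange_big /=.
under eq_bigr do rewrite -mulr_sumr sum_Mn.
by rewrite -mulr_suml x_sum1 mul1r.
Qed.

Lemma regretE (x : row -> R) (y : 'I_n -> R) : mixed x ->
  regret x y =
  \sum_S x S * (\big[Num.max/0]_(S' : row) rowpay S' y - rowpay S y).
Proof.
move=> [_ x_sum1]; under [RHS]eq_bigr do rewrite mulrBr.
rewrite sumrB -mulr_suml x_sum1 mul1r /regret /payoff /rowpay.
congr (_ - _); apply: eq_bigr => S _; rewrite mulr_sumr.
by apply: eq_bigr => j _; rewrite mulrA.
Qed.

Hypothesis k_gt0 : (0 < k)%nat.

Lemma row_regret_ge (y : 'I_n -> R) (m : 'I_n) (S : row) : mixed y ->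
  y m - k%:R^-1 - Mn S m <=
  \big[Num.max/0]_(S' : row) rowpay S' y - rowpay S y.
Proof.
move=> [y_ge0 y_sum1].
have le_max (S' : row) : rowpay S' y <= \big[Num.max/0]_S' rowpay S' y.
  exact: le_bigmax.
have k_inv_ge0 : 0 <= (k%:R : R)^-1 by rewrite invr_ge0 ler0n.
have := le_max S; rewrite /Mn; case: ifP => mS.
  have : y m <= 1 by rewrite -y_sum1 (bigD1 m) //= lerDl sumr_ge0.
  lra.
have cardS : #|val S| = k by exact/eqP/(valP S).
have S_gt0 : (0 < #|val S|)%nat by rewrite cardS.
have [V cardV gain] := exists_swap_set y_ge0 y_sum1 S_gt0 (negbT mS).
rewrite cardS in cardV gain.
have := le_max (exist _ V (introT eqP cardV)); rewrite !rowpayE /=.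
lra.
Qed.

Lemma regret_ge (x : row -> R) (y : 'I_n -> R) (m : 'I_n) :
  mixed x -> mixed y ->
  y m - k%:R^-1 - \sum_S x S * Mn S m <= regret x y.
Proof.
move=> [x_ge0 x_sum1] y_mixed; rewrite regretE //.
have -> : y m - k%:R^-1 - \sum_S x S * Mn S m =
          \sum_S x S * (y m - k%:R^-1 - Mn S m).
  under [RHS]eq_bigr do rewrite mulrBr.
  by rewrite sumrB -mulr_suml x_sum1 mul1r.
apply: ler_sum => S _; apply: ler_wpM2l => //; exact: row_regret_ge.
Qed.

End RegretBound.

Section SqrtBounds.

Variables (F : rcfType) (n k : nat).
Hypotheses (k_gt0 : (0 < k)%nat) (kk_le : (k * k <= n)%nat)
  (n_lt : (n < k.+1 * k.+1)%nat).

Let s := Num.sqrt (n%:R : F).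

Let nat_le_sqrt (a : nat) : (a * a <= n)%nat = ((a%:R : F) <= s).
Proof.
by rewrite -(ger0_norm (ler0n F a)) -sqrtr_sqr ler_sqrt ?ler0n // -natrX ler_nat.
Qed.

Let sqrt_le_nat (a : nat) : (n <= a * a)%nat = (s <= (a%:R : F)).
Proof.
by rewrite -(ger0_norm (ler0n F a)) -sqrtr_sqr ler_sqrt ?sqr_ge0 // -natrX ler_nat.
Qed.

Let sqrt_bracket : k%:R <= s /\ s <= 2 * k%:R.
Proof.
by rewrite -nat_le_sqrt -natrM -sqrt_le_nat; split; nia.
Qed.

Lemma inv_le_sqrt : (k%:R : F)^-1 <= 2 / s.
Proof.
have [_ s_le] := sqrt_bracket.
have k_pos : 0 < (k%:R : F) by rewrite ltr0n.
rewrite ler_pdivlMr ?sqrtr_gt0 ?ltr0n; last lia.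
by rewrite ler_pdivrMl // mulrC.
Qed.

Lemma ratio_le_sqrt (q : F) : n%:R * q <= k%:R -> q <= 1 / s.
Proof.
have [k_le _] := sqrt_bracket.
have s_pos : 0 < s by rewrite sqrtr_gt0 ltr0n; lia.
have ss : s * s = n%:R by rewrite -expr2 sqr_sqrtr // ler0n.
rewrite -ss ler_pdivlMr // => h.
rewrite -(ler_pM2r s_pos) mul1r; apply: le_trans k_le.
by rewrite -mulrA mulrC.
Qed.

End SqrtBounds.

Lemma ksqrt_bracket (n : nat) : (1 <= n)%nat ->
  [/\ (0 < ksqrt n)%nat, (ksqrt n * ksqrt n <= n)%nat
    & (n < (ksqrt n).+1 * (ksqrt n).+1)%nat].
Proof.
move=> n_ge1; rewrite /ksqrt; split.
- apply/ssrnat.leP; apply Nat.sqrt_le_square; lia.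
- apply/ssrnat.leP; apply Nat.sqrt_le_square; lia.
- apply/ssrnat.ltP; apply Nat.sqrt_lt_square; lia.
Qed.

Theorem lemma1 :
  exists K : R, 0 < K /\
  forall n : nat, is_true (leq 1 n) ->
  forall x : rowidx n (ksqrt n) -> R, mixed x ->
  exists m : 'I_n,
  forall (p : R), 0 <= p <= 1 ->
  forall y : 'I_n -> R, mixed y -> y m = p ->
    p - K / Num.sqrt (n%:R) <= regret x y.
Proof.
exists 3; split; first lra.
move=> n n_ge1 x x_mixed.
have [k_gt0 kk_le n_lt] := ksqrt_bracket n_ge1.
pose q j := \sum_S x S * Mn S j.
have [m qm_le] := exists_le_mean q (Ordinal n_ge1).
rewrite card_ord sum_marginals // in qm_le.
exists m => p _ y y_mixed ym.
apply: le_trans (regret_ge k_gt0 m x_mixed y_mixed); rewrite ym.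
have := @inv_le_sqrt R _ _ k_gt0 kk_le n_lt.
have := ratio_le_sqrt k_gt0 kk_le n_lt qm_le.
rewrite -/(q m); set s := Num.sqrt _.
have -> : 3 / s = 2 / s + 1 / s by rewrite -mulrDl; congr (_ / _); lra.
lra.
Qed.
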